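(* Let $\mathcal{C}_1,\mathcal{C}_2$ be small categories, $k$ a field, and $\theta:\mathcal{C}_1\to\mathcal{C}_2$ a covariant functor. If the overcategory $\theta/w$ is a discrete category for every $w\in\mathrm{Ob}\,\mathcal{C}_2$, then $$LK_\theta(C_*(\mathrm{Id}_{\mathcal{C}_1}/?))\cong C_*(\theta/?)\to LK_\theta(\underline{k})\to 0$$ is a projective resolution of the $k\mathcal{C}_2$-module $LK_\theta(\underline{k})\cong \mathrm{H}_0(|\theta/?|,k)$.
   Context: Modules over the category algebra $k\mathcal{C}$ are identified with functors $\mathcal{C}\to\mathrm{Vect}_k$; $\underline{k}$ is the constant functor with value $k$. For $\theta:\mathcal{C}_1\to\mathcal{C}_2$ and $w\in\mathrm{Ob}\,\mathcal{C}_2$, the overcategory $\theta/w$ has objects $(x,\alpha)$ with $x\in\mathrm{Ob}\,\mathcal{C}_1$, $\alpha\in\mathrm{Hom}_{\mathcal{C}_2}(\theta(x),w)$, and morphisms $\beta:(x,\alpha)\to(x',\alpha')$ with $\alpha=\alpha'\theta(\beta)$. $LK_\theta$ is the left Kan extension (left adjoint of restriction along $\theta$), $LK_\theta(M)(w)=\varinjlim_{\theta/w}M\circ\pi$ with $\pi(x,\alpha)=x$. $C_*(\theta/?)$ is the complex of $k\mathcal{C}_2$-modules whose value at $w$ is the simplicial chain complex of the nerve of $\theta/w$ ($C_n(\theta/w)$ has basis the $n$-chains of composable morphisms in $\theta/w$, differential the alternating sum of face maps), functorial in $w$ by postcomposition; for $\theta=\mathrm{Id}_{\mathcal{C}_1}$,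 $C_*(\mathrm{Id}_{\mathcal{C}_1}/?)\to\underline{k}$ is the standard projective resolution of $\underline{k}$. $\mathrm{H}_0(|\theta/?|,k)$ denotes the functor $w\mapsto \mathrm{H}_0(|\theta/w|,k)$, $|\cdot|$ the classifying space. *)

From HB Require Import structures.
From mathcomp Require Import all_boot all_algebra.
From mathcomp Require Import boolp finmap.
From mathcomp.multinomials Require Import monalg.
From Stdlib Require Import ProofIrrelevance.

Set Implicit Arguments.
Unset Strict Implicit.
Unset Printing Implicit Defensive.
Import GRing.Theory.
Local Open Scope ring_scope.

Record category := MkCat {
  Ob : Type;
  Hom : Ob -> Ob -> Type;
  idm : forall x, Hom x x;
  compm : forall x y z, Hom y z -> Hom x y -> Hom x z;
  comp1m : forall x y (f : Hom x y), compm (idm y) f = f;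
  compm1 : forall x y (f : Hom x y), compm f (idm x) = f;
  compA : forall x y z t (f : Hom x y) (g : Hom y z) (h : Hom z t),
      compm h (compm g f) = compm (compm h g) f }.
Arguments idm {c} x.
Arguments compm {c x y z} _ _.
Arguments Hom {c} _ _.

Record functor (C D : category) := Functor {
  fobj : Ob C -> Ob D;
  fmap : forall x y, @Hom C x y -> Hom (fobj x) (fobj y);
  fmap1 : forall x, fmap (idm x) = idm (fobj x);
  fmapM : forall x y z (f : Hom x y) (g : Hom y z),
      fmap (compm g f) = compm (fmap g) (fmap f) }.
Arguments fobj {C D} _ _.
Arguments fmap {C D} _ {x y} _.

Definition idF (C : category) : functor C C :=
  @Functor C C (fun x => x) (fun x y f => f) (fun x => erefl) (fun _ _ _ _ _ => erefl).

Definition discrete (D : category) : Prop :=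
  forall (a b : Ob D) (f : Hom a b),
    exists e : a = b, eq_rect a (fun c => Hom a c) (idm a) b e = f.

Definition overOb C1 C2 (th : functor C1 C2) (w : Ob C2) : Type :=
  {x : Ob C1 & Hom (fobj th x) w}.

Definition overHom C1 C2 (th : functor C1 C2) (w : Ob C2)
    (a b : overOb th w) : Type :=
  {beta : Hom (projT1 a) (projT1 b) | projT2 a = compm (projT2 b) (fmap th beta)}.

Lemma over_id_proof C1 C2 (th : functor C1 C2) w (a : overOb th w) :
  projT2 a = compm (projT2 a) (fmap th (idm (projT1 a))).
Proof. by rewrite fmap1 compm1. Qed.

Definition over_id C1 C2 (th : functor C1 C2) w (a : overOb th w) : overHom a a :=
  exist _ (idm (projT1 a)) (over_id_proof a).

Lemma over_comp_proof C1 C2 (th : functor C1 C2) w (a b c : overOb th w)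
    (g : overHom b c) (f : overHom a b) :
  projT2 a = compm (projT2 c) (fmap th (compm (proj1_sig g) (proj1_sig f))).
Proof.
case: f => f pf; case: g => g pg /=.
by rewrite fmapM compA -pg.
Qed.

Definition over_comp C1 C2 (th : functor C1 C2) w (a b c : overOb th w)
    (g : overHom b c) (f : overHom a b) : overHom a c :=
  exist _ (compm (proj1_sig g) (proj1_sig f)) (over_comp_proof g f).

Lemma sig_eq (A : Type) (P : A -> Prop) (u v : {a : A | P a}) :
  proj1_sig u = proj1_sig v -> u = v.
Proof.
case: u => a pa; case: v => b pb /= eab; subst b.
by rewrite (proof_irrelevance _ pa pb).
Qed.

Lemma over_comp1m C1 C2 (th : functor C1 C2) w (a b : overOb th w) (f : overHom a b) :
  over_comp (over_id b) f = f.
Proof. by apply: sig_eq; rewrite /= comp1m. Qed.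

Lemma over_compm1 C1 C2 (th : functor C1 C2) w (a b : overOb th w) (f : overHom a b) :
  over_comp f (over_id a) = f.
Proof. by apply: sig_eq; rewrite /= compm1. Qed.

Lemma over_compA C1 C2 (th : functor C1 C2) w (a b c d : overOb th w)
    (f : overHom a b) (g : overHom b c) (h : overHom c d) :
  over_comp h (over_comp g f) = over_comp (over_comp h g) f.
Proof. by apply: sig_eq; rewrite /= compA. Qed.

Definition overcat C1 C2 (th : functor C1 C2) (w : Ob C2) : category :=
  @MkCat (overOb th w) (@overHom C1 C2 th w) (@over_id C1 C2 th w)
       (@over_comp C1 C2 th w) (@over_comp1m C1 C2 th w)
       (@over_compm1 C1 C2 th w) (@over_compA C1 C2 th w).

Fixpoint chainFrom (D : category) (x : Ob D) (n : nat) : Type :=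
  match n with
  | 0 => unit
  | n'.+1 => {y : Ob D & (Hom x y * chainFrom y n')%type}
  end.

Definition chain (D : category) (n : nat) : Type := {x : Ob D & chainFrom x n}.

HB.instance Definition _ (D : category) (n : nat) := gen_eqMixin (chain D n).
HB.instance Definition _ (D : category) (n : nat) := gen_choiceMixin (chain D n).

(* i-th face (i >= 1) of a chain starting at x, which keeps x *)
Fixpoint dface (D : category) (n i : nat) (x : Ob D) {struct n} :
    chainFrom x n.+1 -> chainFrom x n :=
  match n return chainFrom x n.+1 -> chainFrom x n with
  | 0 => fun _ => tt
  | n'.+1 => fun c =>
      let (y, p) := c in
      let (f, c') := p in
      match i with
      | 0 | 1 => let (z, q) := c' in let (g, c'') := q in
                 existT _ z (compm g f, c'')
      | i'.+1 => existT _ y (f, dface i' c')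
      end
  end.

(* i-th face map d_i : N_{n+1} -> N_n (deletes the i-th object, 0 <= i <= n+1) *)
Definition face (D : category) (n i : nat) (c : chain D n.+1) : chain D n :=
  match c with
  | existT x c0 =>
      match i with
      | 0 => let (y, p) := c0 in existT _ y p.2
      | _ => existT _ x (dface i c0)
      end
  end.

Fixpoint cfmap (D E : category) (F0 : Ob D -> Ob E)
    (F1 : forall x y, Hom x y -> Hom (F0 x) (F0 y)) (n : nat) (x : Ob D) {struct n} :
    chainFrom x n -> chainFrom (F0 x) n :=
  match n return chainFrom x n -> chainFrom (F0 x) n with
  | 0 => fun _ => tt
  | n'.+1 => fun c =>
      let (y, p) := c in
      let (f, c') := p in
      existT _ (F0 y) (F1 x y f, cfmap F1 c')
  end.

Definition chainmap (D E : category) (F0 : Ob D -> Ob E)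
    (F1 : forall x y, Hom x y -> Hom (F0 x) (F0 y)) (n : nat) (c : chain D n) :
    chain E n :=
  let (x, c0) := c in existT _ (F0 x) (cfmap F1 c0).

Definition Cn (k : fieldType) (D : category) (n : nat) : lmodType k := {malg k[chain D n]}.

Definition lin_ext (k : fieldType) (K : choiceType) (V : lmodType k) (f : K -> V)
    (g : {malg k[K]}) : V :=
  \sum_(x <- msupp g) g@_x *: f x.

Definition dC (k : fieldType) (D : category) (n : nat) : Cn k D n.+1 -> Cn k D n :=
  lin_ext (fun c : chain D n.+1 =>
    \sum_(i < n.+2) (-1) ^+ i *: (<< face i c >> : Cn k D n)).

(* kC-modules = functors C -> Vect_k                                    *)

Record premod (k : fieldType) (C : category) := PreMod {
  pm :> Ob C -> lmodType k;
  pact : forall x y, @Hom C x y -> pm x -> pm y }.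
Arguments pact {k C} _ {x y} _ _.

Definition islin (k : fieldType) (U V : lmodType k) (h : U -> V) : Prop :=
  forall (a : k) (u v : U), h (a *: u + v) = a *: h u + h v.

Definition IsModule (k : fieldType) (C : category) (M : premod k C) : Prop :=
  [/\ forall x y (f : Hom x y), islin (pact M f),
      forall x (v : M x), pact M (idm x) v = v &
      forall x y z (f : Hom x y) (g : Hom y z) (v : M x),
        pact M (compm g f) v = pact M g (pact M f v)].

Definition IsHom (k : fieldType) (C : category) (M N : premod k C)
    (phi : forall x, M x -> N x) : Prop :=
  (forall x, islin (phi x)) /\
  (forall x y (f : Hom x y) (v : M x), phi y (pact M f v) = pact N f (phi x v)).

Definition IsProjective (k : fieldType) (C : category) (P : premod k C) : Prop :=
  IsModule P /\
  forall (N L : premod k C) (p : forall x, N x -> L x) (h : forall x, P x -> L x),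
    IsModule N -> IsModule L -> IsHom p -> (forall x (l : L x), exists m, p x m = l) ->
    IsHom h ->
    exists g : forall x, P x -> N x, IsHom g /\ forall x v, p x (g x v) = h x v.

Definition IsProjResolution (k : fieldType) (C : category) (P : nat -> premod k C)
    (d : forall n x, P n.+1 x -> P n x) (M : premod k C)
    (eps : forall x, P 0 x -> M x) : Prop :=
  [/\ IsModule M,
      forall n, IsProjective (P n),
      forall n, IsHom (d n),
      IsHom eps &
      [/\ forall x (m : M x), exists v, eps x v = m,
          forall x (v : P 0 x), eps x v = 0 <-> exists u, d 0 x u = v &
          forall n x (v : P n.+1 x), d n x v = 0 <-> exists u, d n.+1 x u = v]].

Definition resF (k : fieldType) C1 C2 (th : functor C1 C2) (N : premod k C2) :
    premod k C1 :=
  @PreMod k C1 (fun x => N (fobj th x)) (fun x y f => pact N (fmap th f)).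

(* (L, eta) is a left Kan extension of M along theta, i.e. L = LK_theta(M)
   with unit eta : M -> L o theta (left adjoint of restriction) *)
Definition IsLeftKan (k : fieldType) C1 C2 (th : functor C1 C2) (M : premod k C1)
    (L : premod k C2) (eta : forall x, M x -> L (fobj th x)) : Prop :=
  [/\ IsModule L,
      @IsHom k C1 M (resF th L) eta &
      forall (N : premod k C2) (f : forall x, M x -> N (fobj th x)),
        IsModule N -> @IsHom k C1 M (resF th N) f ->
        exists g : forall w, L w -> N w,
          [/\ IsHom g,
              forall x v, g (fobj th x) (eta x v) = f x v &
              forall g' : forall w, L w -> N w, IsHom g' ->
                (forall x v, g' (fobj th x) (eta x v) = f x v) ->
                forall w v, g' w v = g w v]].

Definition kconst (k : fieldType) (C : category) : premod k C :=
  @PreMod k C (fun _ => k^o) (fun _ _ _ v => v).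

Definition post_ob C1 C2 (th : functor C1 C2) (w w' : Ob C2) (ga : Hom w w')
    (a : Ob (overcat th w)) : Ob (overcat th w') :=
  existT _ (projT1 a) (compm ga (projT2 a)).

Lemma post_hom_proof C1 C2 (th : functor C1 C2) (w w' : Ob C2) (ga : Hom w w')
    (a b : Ob (overcat th w)) (f : Hom a b) :
  projT2 (post_ob ga a) = compm (projT2 (post_ob ga b)) (fmap th (proj1_sig f)).
Proof. by case: f => f pf /=; rewrite -compA -pf. Qed.

Definition post_hom C1 C2 (th : functor C1 C2) (w w' : Ob C2) (ga : Hom w w')
    (a b : Ob (overcat th w)) (f : Hom a b) :
    @Hom (overcat th w') (post_ob ga a) (post_ob ga b) :=
  exist _ (proj1_sig f) (post_hom_proof ga f).

Definition Cmod (k : fieldType) C1 C2 (th : functor C1 C2) (n : nat) : premod k C2 :=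
  @PreMod k C2 (fun w => Cn k (overcat th w) n)
    (fun w w' ga => lin_ext (fun c : chain (overcat th w) n =>
        (<< chainmap (@post_hom C1 C2 th w w' ga) c >> : Cn k (overcat th w') n))).

Definition dCmod (k : fieldType) C1 C2 (th : functor C1 C2) (n : nat) (w : Ob C2) :
    Cmod k th n.+1 w -> Cmod k th n w := @dC k (overcat th w) n.

Definition etaF_ob C1 C2 (th : functor C1 C2) (x : Ob C1)
    (a : Ob (overcat (idF C1) x)) : Ob (overcat th (fobj th x)) :=
  existT _ (projT1 a) (fmap th (projT2 a)).

Lemma etaF_hom_proof C1 C2 (th : functor C1 C2) (x : Ob C1)
    (a b : Ob (overcat (idF C1) x)) (f : Hom a b) :
  projT2 (etaF_ob th a) = compm (projT2 (etaF_ob th b)) (fmap th (proj1_sig f)).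
Proof. by case: f => f pf /=; rewrite -fmapM -pf. Qed.

Definition etaF_hom C1 C2 (th : functor C1 C2) (x : Ob C1)
    (a b : Ob (overcat (idF C1) x)) (f : Hom a b) :
    @Hom (overcat th (fobj th x)) (etaF_ob th a) (etaF_ob th b) :=
  exist _ (proj1_sig f) (etaF_hom_proof th f).

(* the canonical map C_n(Id/x) -> C_n(theta/theta x) = (LK_theta C_n(Id/?))(theta x) *)
Definition etaC (k : fieldType) C1 C2 (th : functor C1 C2) (n : nat) (x : Ob C1) :
    Cmod k (idF C1) n x -> Cmod k th n (fobj th x) :=
  lin_ext (fun c : chain (overcat (idF C1) x) n =>
    (<< chainmap (@etaF_hom C1 C2 th x) c >> : Cn k (overcat th (fobj th x)) n)).

Definition augC (k : fieldType) C1 C2 (th : functor C1 C2) (L : premod k C2)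
    (eta : forall x, kconst k C1 x -> L (fobj th x)) (w : Ob C2) :
    Cmod k th 0 w -> L w :=
  lin_ext (fun c : chain (overcat th w) 0 =>
    pact L (projT2 (projT1 c)) (eta (projT1 (projT1 c)) 1)).

Arguments IsLeftKan {k C1 C2} th M L eta.
Arguments etaC k {C1 C2} th n x _.
Arguments dCmod k {C1 C2} th n w _.
Arguments IsProjResolution {k C} P d M eps.
Arguments augC k {C1 C2} th L eta w _.

From Pilot Require Import Defs.
From HB Require Import structures.
From mathcomp Require Import all_boot all_algebra.
From mathcomp Require Import boolp finmap.
From mathcomp.multinomials Require Import monalg.

(* If every theta/w is discrete, then so is C1 (test a morphism f : x -> y in
   theta/theta(y)), hence every n-chain of theta/w is a chain of identities.
   Thus C_n(theta/?) is the free module k[Ob theta/?] = (+)_x k[Hom(theta x, ?)],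
   a sum of representables, so projective and the left Kan extension of
   C_n(Id/?) = (+)_x k. The differential is the alternating sum of n+2 equal
   faces, i.e. alternately 0 and an isomorphism, so the complex is exact in
   positive degrees, and H_0 = C_0(theta/?) is LK_theta(k). *)

Set Implicit Arguments.
Unset Strict Implicit.
Unset Printing Implicit Defensive.
Import GRing.Theory.
Local Open Scope ring_scope.

Section Linearity.
Variables (k : fieldType) (U V W : lmodType k).

Lemma islin0 (h : U -> V) : islin h -> h 0 = 0.
Proof.
move=> hl; have E := hl 1 0 0; rewrite !scale1r addr0 in E.
by apply: (@addrI _ (h 0)); rewrite addr0 -E.
Qed.

Lemma islinD (h : U -> V) : islin h -> forall u v, h (u + v) = h u + h v.
Proof. by move=> hl u v; have := hl 1 u v; rewrite !scale1r. Qed.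

Lemma islinZ (h : U -> V) : islin h -> forall a u, h (a *: u) = a *: h u.
Proof. by move=> hl a u; have := hl a u 0; rewrite (islin0 hl) !addr0. Qed.

Lemma islin_sum (h : U -> V) (I : Type) (s : seq I) (F : I -> U) :
  islin h -> h (\sum_(i <- s) F i) = \sum_(i <- s) h (F i).
Proof.
move=> hl; elim: s => [|a s IH]; first by rewrite !big_nil islin0.
by rewrite !big_cons islinD // IH.
Qed.

Lemma islin_comp (h1 : V -> W) (h2 : U -> V) :
  islin h1 -> islin h2 -> islin (fun u => h1 (h2 u)).
Proof. by move=> l1 l2 a u v; rewrite l2 l1. Qed.

Lemma islin_id : islin (fun u : U => u).
Proof. by []. Qed.

Lemma islin_scale (a : k) : islin (fun u : U => a *: u).
Proof. by move=> b u v; rewrite scalerDr !scalerA mulrC. Qed.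

End Linearity.

Section LinearExtension.
Variables (k : fieldType) (K : choiceType) (V : lmodType k).

Lemma lin_ext_fsubset (f : K -> V) (g : {malg k[K]}) (d : {fset K}) :
  (msupp g `<=` d)%fset -> lin_ext f g = \sum_(x <- d) g@_x *: f x.
Proof.
move=> sd; rewrite /lin_ext; apply: big_fset_incl => // x _ xn.
by rewrite mcoeff_outdom // scale0r.
Qed.

Lemma lin_ext_islin (f : K -> V) : islin (lin_ext f).
Proof.
move=> a u v.
have su : (msupp u `<=` msupp u `|` msupp v)%fset by apply: fsubsetUl.
have sv : (msupp v `<=` msupp u `|` msupp v)%fset by apply: fsubsetUr.
have sw : (msupp (a *: u + v) `<=` msupp u `|` msupp v)%fset.
  by apply: fsubset_trans (msuppD_le _ _) _; apply: fsetSU; exact: msuppZ_le.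
rewrite (lin_ext_fsubset _ sw) (lin_ext_fsubset _ su) (lin_ext_fsubset _ sv).
rewrite scaler_sumr -big_split /=; apply: eq_bigr => x _.
by rewrite mcoeffD mcoeffZ scalerDl scalerA.
Qed.

Lemma lin_extU (f : K -> V) (c : K) : lin_ext f << c >> = f c.
Proof. by rewrite /lin_ext msuppU oner_eq0 big_seq_fset1 mcoeffUU scale1r. Qed.

Lemma malgUZ (a : k) (c : K) : << a *g c >> = a *: (<< c >> : {malg k[K]}).
Proof.
apply/malgP => x; rewrite mcoeffZ !mcoeffU.
by case: (c == x); rewrite ?mulr1 ?mulr0.
Qed.

Lemma lin_extE (h : {malg k[K]} -> V) :
  islin h -> forall g, h g = lin_ext (fun c => h << c >>) g.
Proof.
move=> hl g; rewrite {1}(monalgE g) islin_sum //; apply: eq_bigr => c _.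
by rewrite malgUZ islinZ.
Qed.

Lemma eq_lin_ext (h1 h2 : {malg k[K]} -> V) : islin h1 -> islin h2 ->
  (forall c, h1 << c >> = h2 << c >>) -> forall g, h1 g = h2 g.
Proof.
move=> l1 l2 E g; rewrite (lin_extE l1) (lin_extE l2).
by congr lin_ext; apply: functional_extensionality_dep => c; rewrite E.
Qed.

End LinearExtension.

Lemma sum_alt_sign (k : fieldType) m : \sum_(i < m) (-1 : k) ^+ i = (odd m)%:R.
Proof.
elim: m => [|m IH]; first by rewrite big_ord0.
rewrite big_ord_recr /= IH -signr_odd; case: (odd m) => /=.
  by rewrite expr1 addrN.
by rewrite expr0 add0r.
Qed.

Section DiscreteNerve.
Variables (D : category) (hD : discrete D).

Fixpoint idchainFrom (x : Ob D) (n : nat) : chainFrom x n :=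
  match n return chainFrom x n with
  | 0 => tt
  | n'.+1 => existT _ x (idm x, idchainFrom x n')
  end.

Definition idchain (x : Ob D) (n : nat) : chain D n := existT _ x (idchainFrom x n).

Lemma chainFrom_discrete n (x : Ob D) (c : chainFrom x n) : c = idchainFrom x n.
Proof.
elim: n x c => [|n IH] x c /=; first by case: c.
case: c => y [f c']; have [e He] := hD f.
by destruct e; simpl in He; subst f; rewrite (IH x c').
Qed.

Lemma chain_discrete n (c : chain D n) : c = idchain (projT1 c) n.
Proof. by case: c => x c /=; rewrite /idchain (chainFrom_discrete c). Qed.

Lemma face_idchain n (a : Ob D) (i : nat) : face i (idchain a n.+1) = idchain a n.
Proof.
rewrite (chain_discrete (face i (idchain a n.+1))).
by have -> : projT1 (face i (idchain a n.+1)) = a by case: i.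
Qed.

Lemma dC_U (k : fieldType) n (c : chain D n.+1) :
  @dC k D n << c >> = (odd n)%:R *: << idchain (projT1 c) n >>.
Proof.
rewrite /dC lin_extU (chain_discrete c).
under eq_bigr => i _ do rewrite face_idchain.
by rewrite -scaler_suml sum_alt_sign /= negbK.
Qed.

Variables (k : fieldType) (n : nat).

Definition lowerC : Cn k D n.+1 -> Cn k D n :=
  lin_ext (fun c : chain D n.+1 => (<< idchain (projT1 c) n >> : Cn k D n)).
Definition raiseC : Cn k D n -> Cn k D n.+1 :=
  lin_ext (fun c : chain D n => (<< idchain (projT1 c) n.+1 >> : Cn k D n.+1)).

Lemma dC_lowerC v : @dC k D n v = (odd n)%:R *: lowerC v.
Proof.
apply: (@eq_lin_ext _ _ _ (@dC k D n) (fun v => (odd n)%:R *: lowerC v) (lin_ext_islin _)).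
  exact: islin_comp (islin_scale _) (lin_ext_islin _).
by move=> c; rewrite dC_U /lowerC lin_extU.
Qed.

Lemma lowerC_raiseC v : lowerC (raiseC v) = v.
Proof.
apply: (@eq_lin_ext _ _ _ (fun v => lowerC (raiseC v)) id (islin_comp (lin_ext_islin _) (lin_ext_islin _)) (@islin_id _ _)).
by move=> c; rewrite /raiseC /lowerC !lin_extU /= -(chain_discrete c).
Qed.

Lemma raiseC_lowerC v : raiseC (lowerC v) = v.
Proof.
apply: (@eq_lin_ext _ _ _ (fun v => raiseC (lowerC v)) id (islin_comp (lin_ext_islin _) (lin_ext_islin _)) (@islin_id _ _)).
by move=> c; rewrite /raiseC /lowerC !lin_extU /= -(chain_discrete c).
Qed.

End DiscreteNerve.

Lemma dC0 (k : fieldType) (D : category) n : @dC k D n 0 = 0.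
Proof. exact/islin0/lin_ext_islin. Qed.

Lemma dC_exact (k : fieldType) (D : category) (hD : discrete D) n (v : Cn k D n.+1) :
  @dC k D n v = 0 <-> exists u, @dC k D n.+1 u = v.
Proof.
case On : (odd n).
- split.
  + rewrite dC_lowerC // On scale1r => lv0; exists 0.
    by rewrite dC0 -(raiseC_lowerC hD v) lv0 islin0 //; exact: lin_ext_islin.
  + by case=> u <-; rewrite [@dC k D n.+1 u]dC_lowerC //= On /= scale0r dC0.
- split=> [_|_]; last by rewrite dC_lowerC // On scale0r.
  by exists (raiseC v); rewrite dC_lowerC //= On /= scale1r lowerC_raiseC.
Qed.

Section DiscreteOvercategories.
Variables (C1 C2 : category) (th : functor C1 C2).

Lemma overcat_eq_rect_proj w (a b : overOb th w) (e : a = b) :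
  proj1_sig (eq_rect a (fun c => @Defs.Hom (overcat th w) a c) (@idm (overcat th w) a) b e) =
  eq_rect (projT1 a) (fun c => Defs.Hom (projT1 a) c) (idm (projT1 a)) (projT1 b)
    (f_equal (@projT1 _ _) e).
Proof. by destruct e. Qed.

Lemma discrete_of_overcat : (forall w, discrete (overcat th w)) -> discrete C1.
Proof.
move=> hD x y f.
pose a : overOb th (fobj th y) := existT _ x (fmap th f).
pose b : overOb th (fobj th y) := existT _ y (idm (fobj th y)).
have pf : projT2 a = compm (projT2 b) (fmap th f) by rewrite /= comp1m.
have [e He] := hD _ a b (exist _ f pf).
exists (f_equal (@projT1 _ _) e).
by rewrite -(overcat_eq_rect_proj e) He.
Qed.

Lemma discrete_overcat w : discrete C1 -> discrete (overcat th w).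
Proof.
move=> hC [x al] [y al'] [be pf] /=; simpl in be, pf.
have [e He] := hC x y be.
destruct e; simpl in He; subst be.
have E : al = al' by rewrite [in LHS]pf fmap1 compm1.
by subst al'; exists erefl => /=; exact: sig_eq.
Qed.

End DiscreteOvercategories.

Definition over_unit (C1 C2 : category) (th : functor C1 C2) x :
  Ob (overcat th (fobj th x)) := existT _ x (idm (fobj th x)).

Lemma overcat_idF_ob (C : category) (hC : discrete C) x (a : Ob (overcat (idF C) x)) :
  a = over_unit (idF C) x.
Proof.
case: a => y g; have [e He] := hC y x g.
by destruct e; simpl in He; subst g.
Qed.

Lemma pactC_U (k : fieldType) (C1 C2 : category) (th : functor C1 C2)
    w w' (ga : Defs.Hom w w') n : discrete (overcat th w') ->
  forall c : chain (overcat th w) n,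
  pact (Cmod k th n) ga (<< c >> : Cn k (overcat th w) n)
  = << idchain (post_ob ga (projT1 c)) n >>.
Proof.
move=> hD' c; rewrite /= lin_extU; set c' := chainmap _ c.
by rewrite (chain_discrete hD' c'); case: c @c'.
Qed.

Section ChainModules.
Variables (k : fieldType) (C1 C2 : category) (th : functor C1 C2).

Lemma post_ob_id w (a : Ob (overcat th w)) : post_ob (idm w) a = a.
Proof. by case: a => x al; rewrite /post_ob /= comp1m. Qed.

Lemma post_ob_comp w w' w'' (f : Defs.Hom w w') (g : Defs.Hom w' w'')
    (a : Ob (overcat th w)) :
  post_ob (compm g f) a = post_ob g (post_ob f a).
Proof. by case: a => x al; rewrite /post_ob /= Defs.compA. Qed.

(* A hom out of C_n(theta/?) is determined by its values on the identity
   chains at the objects (x, id) of theta/theta(x). *)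
Definition yoneda_ext (N : premod k C2) (m : forall x, N (fobj th x)) n w :
    Cmod k th n w -> N w :=
  lin_ext (fun c : chain (overcat th w) n =>
    pact N (projT2 (projT1 c)) (m (projT1 (projT1 c)))).
Arguments yoneda_ext {N} m n w _.

Lemma yoneda_ext_unit (N : premod k C2) (m : forall x, N (fobj th x)) n :
  IsModule N -> forall x,
  yoneda_ext m n (fobj th x) (<< idchain (over_unit th x) n >> : Cn k _ n) = m x.
Proof. by case=> _ h1 _ x; rewrite /yoneda_ext lin_extU /= h1. Qed.

Hypothesis hD : forall w, discrete (overcat th w).

Let hC : discrete C1 := discrete_of_overcat hD.
Let hI x : discrete (overcat (idF C1) x) := @discrete_overcat _ _ (idF C1) x hC.

Lemma etaC_U n x (c : chain (overcat (idF C1) x) n) :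
  etaC k th n x (<< c >> : Cn k (overcat (idF C1) x) n)
  = << idchain (etaF_ob th (projT1 c)) n >>.
Proof.
rewrite /etaC lin_extU; set c' := chainmap _ c.
by rewrite (chain_discrete (@hD _) c'); case: c @c'.
Qed.

Lemma Cmod_module n : IsModule (Cmod k th n).
Proof.
split.
- by move=> x y f; exact: lin_ext_islin.
- move=> x; apply: eq_lin_ext; [exact: lin_ext_islin | exact: islin_id |] => c.
  by rewrite pactC_U // post_ob_id -(chain_discrete (@hD x) c).
- move=> x y z f g; apply: eq_lin_ext; first exact: lin_ext_islin.
  + exact: islin_comp (lin_ext_islin _) (lin_ext_islin _).
  + by move=> c; rewrite !pactC_U // post_ob_comp.
Qed.

Lemma yoneda_ext_hom (N : premod k C2) (m : forall x, N (fobj th x)) n :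
  IsModule N -> @IsHom k C2 (Cmod k th n) N (yoneda_ext m n).
Proof.
case=> hl _ hM; split; first by move=> w; exact: lin_ext_islin.
move=> w w' ga; apply: eq_lin_ext.
- exact: islin_comp (lin_ext_islin _) (lin_ext_islin _).
- exact: islin_comp (hl _ _ _) (lin_ext_islin _).
- by move=> c; rewrite pactC_U // /yoneda_ext !lin_extU /= hM.
Qed.

Lemma yoneda_extE (N : premod k C2) n (h : forall w, Cmod k th n w -> N w) :
  IsHom h -> forall w v,
  h w v = yoneda_ext (fun x => h (fobj th x) (<< idchain (over_unit th x) n >>)) n w v.
Proof.
case=> hl hn w; apply: eq_lin_ext; [exact: hl | exact: lin_ext_islin |] => c.
rewrite /yoneda_ext lin_extU (chain_discrete (@hD w) c) /=.
case: (projT1 c) => x al /=; rewrite -hn pactC_U //.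
by rewrite /post_ob /= compm1.
Qed.

Lemma etaC_unit n x :
  etaC k th n x << idchain (over_unit (idF C1) x) n >> = << idchain (over_unit th x) n >>.
Proof. by rewrite etaC_U /etaF_ob /over_unit /= fmap1. Qed.

Lemma etaC_hom n :
  @IsHom k C1 (Cmod k (idF C1) n) (resF th (Cmod k th n)) (etaC k th n).
Proof.
split; first by move=> x; exact: lin_ext_islin.
move=> x y f; apply: (@eq_lin_ext _ _ _
    (fun v => etaC k th n y (pact (Cmod k (idF C1) n) f v))
    (fun v => pact (Cmod k th n) (fmap th f) (etaC k th n x v))).
- exact: islin_comp (lin_ext_islin _) (lin_ext_islin _).
- exact: islin_comp (lin_ext_islin _) (lin_ext_islin _).
- move=> c; rewrite pactC_U // etaC_U etaC_U pactC_U // /=.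
  by case: (projT1 c) => z g; rewrite /etaF_ob /post_ob /= fmapM.
Qed.

Lemma Cmod_kan n : IsLeftKan th (Cmod k (idF C1) n) (Cmod k th n) (etaC k th n).
Proof.
split; [exact: Cmod_module | exact: etaC_hom |].
move=> N f hN hf.
pose m x := f x (<< idchain (over_unit (idF C1) x) n >>).
exists (yoneda_ext m n); split; first exact: yoneda_ext_hom.
- move=> x; apply: eq_lin_ext; [| exact: hf.1 |].
    exact: islin_comp (lin_ext_islin _) (lin_ext_islin _).
  move=> c; rewrite (chain_discrete (@hI x) c) (overcat_idF_ob hC (projT1 c)).
  by rewrite etaC_unit yoneda_ext_unit.
- move=> g' hg' hg'f w v; rewrite (yoneda_extE hg'); congr (yoneda_ext _ n w v).
  by apply: functional_extensionality_dep => x; rewrite /m -hg'f etaC_unit.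
Qed.

Lemma dCmod_etaC n x (v : Cmod k (idF C1) n.+1 x) :
  dCmod k th n (fobj th x) (etaC k th n.+1 x v) = etaC k th n x (dCmod k (idF C1) n x v).
Proof.
move: v; apply: eq_lin_ext; try exact: islin_comp (lin_ext_islin _) (lin_ext_islin _).
move=> c; rewrite etaC_U /dCmod !dC_U // islinZ ?etaC_U //.
exact: lin_ext_islin.
Qed.

Lemma dCmod_hom n : @IsHom k C2 (Cmod k th n.+1) (Cmod k th n) (dCmod k th n).
Proof.
split; first by move=> w; exact: lin_ext_islin.
move=> w w' ga; apply: eq_lin_ext;
  try exact: islin_comp (lin_ext_islin _) (lin_ext_islin _).
move=> c; rewrite pactC_U // /dCmod !dC_U // islinZ ?pactC_U //.
exact: lin_ext_islin.
Qed.

Lemma Cmod_projective n : IsProjective (Cmod k th n).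
Proof.
split; first exact: Cmod_module.
move=> N L p h hN hL hp hs hh.
pose m x := proj1_sig (constructive_indefinite_description
  (hs (fobj th x) (h (fobj th x) (<< idchain (over_unit th x) n >>)))).
exists (yoneda_ext m n); split; first exact: yoneda_ext_hom.
move=> w v; rewrite (yoneda_extE hh).
move: v; apply: eq_lin_ext => [||c]; [exact: islin_comp (hp.1 w) (lin_ext_islin _)
  | exact: lin_ext_islin |].
rewrite /yoneda_ext !lin_extU /= hp.2; congr (pact L _ _).
by rewrite /m; case: constructive_indefinite_description.
Qed.

(* The augmentation is inverted by the map LK_theta(k) -> C_0(theta/?) induced
   by the universal property from the unit x |-> (x, id). *)
Definition unitC0 x (v : kconst k C1 x) : Cmod k th 0 (fobj th x) :=
  (v : k) *: << idchain (over_unit th x) 0 >>.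
Arguments unitC0 : clear implicits.

Lemma unitC0_hom : @IsHom k C1 (kconst k C1) (resF th (Cmod k th 0)) unitC0.
Proof.
split; first by move=> x a u v; rewrite /unitC0 scalerDl scalerA.
move=> x y f v; have [e He] := hC f; destruct e; simpl in He; subst f.
have [_ hid _] := Cmod_module 0.
by rewrite [RHS]/= fmap1 [RHS]hid.
Qed.

Variables (L : premod k C2) (eta : forall x, kconst k C1 x -> L (fobj th x)).
Hypothesis hK : IsLeftKan th (kconst k C1) L eta.

Lemma augCE : augC k th L eta = yoneda_ext (fun x => @eta x 1) 0.
Proof. by []. Qed.

Lemma augC_hom : @IsHom k C2 (Cmod k th 0) L (augC k th L eta).
Proof. by case: hK => hL _ _; rewrite augCE; exact: yoneda_ext_hom. Qed.

Lemma augC_unitC0 x v : augC k th L eta (fobj th x) (unitC0 x v) = @eta x v.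
Proof.
case: hK => hL heta _.
rewrite /unitC0 islinZ; last exact: augC_hom.1.
rewrite augCE (yoneda_ext_unit _ _ hL) -(islinZ (heta.1 x)).
by rewrite /GRing.scale /= mulr1.
Qed.

Lemma augC_inverse : exists g : forall w, L w -> Cmod k th 0 w,
  [/\ forall w, islin (g w),
      forall w v, augC k th L eta w (g w v) = v &
      forall w u, g w (augC k th L eta w u) = u].
Proof.
case: hK => hL heta hU.
have [g [hg hgeta _]] := hU _ _ (Cmod_module 0) unitC0_hom.
have [g1 [_ _ g1_uniq]] := hU L eta hL heta.
have id_hom : @IsHom k C2 L L (fun w v => v) by [].
have idL w v : v = g1 w v := g1_uniq _ id_hom (fun _ _ => erefl) w v.
have hcomp : @IsHom k C2 L L (fun w v => augC k th L eta w (g w v)).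
  split; first by move=> w; exact: islin_comp (augC_hom.1 w) (hg.1 w).
  by move=> w w' ga v; rewrite hg.2 augC_hom.2.
exists g; split; first exact: hg.1.
- move=> w v; rewrite [RHS]idL; apply: (g1_uniq _ hcomp) => x v'.
  by rewrite hgeta augC_unitC0.
- move=> w; apply: eq_lin_ext => [||c]; [exact: islin_comp (hg.1 w) (augC_hom.1 w)
    | exact: islin_id |].
  rewrite augCE /yoneda_ext lin_extU /= hg.2 hgeta /unitC0 scale1r pactC_U //.
  rewrite [in RHS](chain_discrete (@hD w) c) /=.
  by case: (projT1 c) => x al; rewrite /post_ob /over_unit /= compm1.
Qed.

End ChainModules.

Theorem lemma2p3p2 (k : fieldType) (C1 C2 : category) (th : functor C1 C2) :
  (forall w : Ob C2, discrete (overcat th w)) ->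
  [/\ (forall n : nat, IsLeftKan th (Cmod k (idF C1) n) (Cmod k th n) (etaC k th n)),
      (forall (n : nat) (x : Ob C1) (v : Cmod k (idF C1) n.+1 x),
         dCmod k th n (fobj th x) (etaC k th n.+1 x v)
         = etaC k th n x (dCmod k (idF C1) n x v)) &
      forall (L : premod k C2) (eta : forall x, kconst k C1 x -> L (fobj th x)),
        IsLeftKan th (kconst k C1) L eta ->
        IsProjResolution (Cmod k th) (dCmod k th) L (augC k th L eta)].
Proof.
move=> hD; split; [exact: Cmod_kan | exact: dCmod_etaC |].
move=> L eta hK; have [g [hg augCg gaugC]] := augC_inverse hD hK.
split; [by case: hK | exact: Cmod_projective | exact: dCmod_hom
       | exact: augC_hom |].
split=> [w m | w v | n w v]; last exact: dC_exact.
- by exists (g w m).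
- split=> [augv0 | [u <-]].
  + by exists 0; rewrite -(gaugC w v) augv0 (islin0 (hg w)) /dCmod dC0.
  + rewrite /dCmod (dC_lowerC (hD w)) /= scale0r.
    exact: islin0 ((augC_hom hD hK).1 w).
Qed.
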